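(* If $\mathcal{R}$ is a finite family of axis-parallel rectangles in general position that is triangle-free and non-crossing, then its intersection graph $G_{\mathcal{R}}$ is planar.
   Context: Rectangles are closed axis-parallel rectangles $X\times Y$; general position means all specifying intervals have pairwise distinct endpoints. Two rectangles intersect if they share a point; $G_{\mathcal{R}}$ has vertex set $\mathcal{R}$ and an edge between any two distinct intersecting rectangles. A family is triangle-free if no three of its rectangles are pairwise intersecting. Two rectangles cross if they intersect but neither contains a corner of the other; a family is non-crossing if no two of its rectangles cross. *)

From Stdlib Require Import Reals Lra.
Open Scope R_scope.

Record rect := Rect {
  x1 : R; x2 : R; y1 : R; y2 : R;
  x_lt : x1 < x2; y_lt : y1 < y2 }.

Definition in_rect (r : rect) (p : R * R) : Prop :=
  x1 r <= fst p <= x2 r /\ y1 r <= snd p <= y2 r.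

Definition intersect (r s : rect) : Prop :=
  exists p, in_rect r p /\ in_rect s p.

Definition corners (r : rect) : list (R * R) :=
  ((x1 r, y1 r) :: (x1 r, y2 r) :: (x2 r, y1 r) :: (x2 r, y2 r) :: nil)%list.

Definition contains_corner_of (r s : rect) : Prop :=
  exists c, List.In c (corners s) /\ in_rect r c.

Definition cross (r s : rect) : Prop :=
  intersect r s /\ ~ contains_corner_of r s /\ ~ contains_corner_of s r.

(* A finite family of n rectangles, indexed by 0..n-1. *)
Definition general_position (n : nat) (F : nat -> rect) : Prop :=
  forall i j, (i < n)%nat -> (j < n)%nat -> i <> j ->
    x1 (F i) <> x1 (F j) /\ x1 (F i) <> x2 (F j) /\
    x2 (F i) <> x1 (F j) /\ x2 (F i) <> x2 (F j) /\
    y1 (F i) <> y1 (F j) /\ y1 (F i) <> y2 (F j) /\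
    y2 (F i) <> y1 (F j) /\ y2 (F i) <> y2 (F j).

Definition triangle_free (n : nat) (F : nat -> rect) : Prop :=
  forall i j k, (i < n)%nat -> (j < n)%nat -> (k < n)%nat ->
    i <> j -> j <> k -> i <> k ->
    ~ (intersect (F i) (F j) /\ intersect (F j) (F k) /\ intersect (F i) (F k)).

Definition non_crossing (n : nat) (F : nat -> rect) : Prop :=
  forall i j, (i < n)%nat -> (j < n)%nat -> i <> j -> ~ cross (F i) (F j).

Definition ig_edge (F : nat -> rect) (i j : nat) : Prop :=
  i <> j /\ intersect (F i) (F j).

Definition cont01 (g : R -> R * R) : Prop :=
  forall t, 0 <= t <= 1 -> forall eps, eps > 0 -> exists delta, delta > 0 /\
    forall s, 0 <= s <= 1 -> Rabs (s - t) < delta ->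
      Rabs (fst (g s) - fst (g t)) < eps /\ Rabs (snd (g s) - snd (g t)) < eps.

(* A graph on vertex set {0,...,n-1} with (symmetric) edge relation E is planar
   if it has a drawing in the plane: distinct points for the vertices, and for
   every edge a simple arc (continuous injective image of [0,1]) joining its
   endpoints whose interior avoids all vertex points, with interiors of arcs
   of distinct edges disjoint. *)
Definition planar (n : nat) (E : nat -> nat -> Prop) : Prop :=
  exists (pos : nat -> R * R) (arc : nat -> nat -> R -> R * R),
    (forall i j, (i < n)%nat -> (j < n)%nat -> pos i = pos j -> i = j) /\
    (forall i j, (i < j)%nat -> (j < n)%nat -> E i j ->
       cont01 (arc i j) /\ arc i j 0 = pos i /\ arc i j 1 = pos j /\
       (forall s t, 0 <= s <= 1 -> 0 <= t <= 1 -> arc i j s = arc i j t -> s = t) /\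
       (forall t k, 0 < t < 1 -> (k < n)%nat -> arc i j t <> pos k)) /\
    (forall i j k l, (i < j)%nat -> (j < n)%nat -> (k < l)%nat -> (l < n)%nat ->
       E i j -> E k l -> (i, j) <> (k, l) ->
       forall s t, 0 < s < 1 -> 0 < t < 1 -> arc i j s <> arc k l t).

From Stdlib Require Import Reals Lra Lia Psatz Classical ClassicalEpsilon.
Open Scope R_scope.

(* Call a rectangle a leaf if it lies inside another one; by triangle-freeness
   its host is unique and is not a leaf itself. Two intersecting non-leaf
   rectangles A, B overlap, by general position and non-crossing, either at a
   pair of corners or with one of them poking through a side of the other. In
   both cases an affine function [sep A B] vanishes at a contact point of
   A ∩ B and is positive on A only inside B. The cell of a non-leaf rectangle
   A is the interior of A on the negative side of all its separators: cells
   are convex, nonempty and pairwise disjoint, since a common point of two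
   cells would lie on the negative side of two opposite separators. A non-leaf
   rectangle is drawn at a point of its cell and each of its edges as two
   segments through the contact point; a leaf is drawn in the cell of its host,
   on a ray steeper than every rightward segment from that point to a contact
   point, and joined to its host by a segment. *)

Definition inside (A : rect) (p : R * R) : Prop :=
  x1 A < fst p < x2 A /\ y1 A < snd p < y2 A.

Lemma inside_in_rect A p : inside A p -> in_rect A p.
Proof. unfold inside, in_rect; lra. Qed.

Lemma corner_in_rect A : in_rect A (x1 A, y1 A).
Proof. pose proof (x_lt A); pose proof (y_lt A); unfold in_rect; simpl; lra. Qed.

Lemma intersect_iff A B : intersect A B <->
  x1 A <= x2 B /\ x1 B <= x2 A /\ y1 A <= y2 B /\ y1 B <= y2 A.
Proof.
  split.
  - intros [p [[[? ?] [? ?]] [[? ?] [? ?]]]]; lra.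
  - intros (?&?&?&?).
    pose proof (x_lt A); pose proof (x_lt B); pose proof (y_lt A); pose proof (y_lt B).
    exists (Rmax (x1 A) (x1 B), Rmax (y1 A) (y1 B)). unfold in_rect; simpl.
    unfold Rmax; destruct Rle_dec; destruct Rle_dec; split; split; split; lra.
Qed.

Lemma intersect_sym A B : intersect A B -> intersect B A.
Proof. intros [p [? ?]]; exists p; auto. Qed.

Definition nested (A B : rect) : Prop :=
  x1 B < x1 A /\ x2 A < x2 B /\ y1 B < y1 A /\ y2 A < y2 B.

(* [A] is narrower and taller than [B]: together they form a cross. *)
Definition plus_shaped (A B : rect) : Prop :=
  x1 B < x1 A /\ x2 A < x2 B /\ y1 A < y1 B /\ y2 B < y2 A.

Lemma nested_in_rect A B p : nested A B -> in_rect A p -> in_rect B p.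
Proof. unfold nested, in_rect; lra. Qed.

Lemma plus_shaped_cross A B : intersect A B -> plus_shaped A B -> cross A B.
Proof.
  intros HI (a&b&c&d). split; [auto|split].
  - intros [cc [Hin Hr]]. simpl in Hin. unfold in_rect in Hr.
    destruct Hin as [<-|[<-|[<-|[<-|[]]]]]; simpl in Hr; lra.
  - intros [cc [Hin Hr]]. simpl in Hin. unfold in_rect in Hr.
    destruct Hin as [<-|[<-|[<-|[<-|[]]]]]; simpl in Hr; lra.
Qed.

Definition regular_pair (A B : rect) : Prop :=
  x1 A <> x1 B /\ x1 A <> x2 B /\ x2 A <> x1 B /\ x2 A <> x2 B /\
  y1 A <> y1 B /\ y1 A <> y2 B /\ y2 A <> y1 B /\ y2 A <> y2 B /\
  x1 A <= x2 B /\ x1 B <= x2 A /\ y1 A <= y2 B /\ y1 B <= y2 A /\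
  ~ nested A B /\ ~ nested B A /\ ~ plus_shaped A B /\ ~ plus_shaped B A.

Definition Rltb (a b : R) : bool := if Rlt_dec a b then true else false.

Lemma RltbP a b : (Rltb a b = true /\ a < b) \/ (Rltb a b = false /\ b <= a).
Proof. unfold Rltb; destruct (Rlt_dec a b); [left|right]; split; auto; lra. Qed.

Lemma Rltb_swap a b : a <> b -> Rltb b a = negb (Rltb a b).
Proof. intros H; unfold Rltb; destruct (Rlt_dec a b), (Rlt_dec b a); simpl; auto; lra. Qed.

(* [[xa, xb] × [ya, yb]] is the box A ∩ B. When A lies on the same side of B
   horizontally and vertically (b1 = b2 and c1 = c2) the rectangles overlap at
   corners, and [sep] vanishes on the diagonal of the box joining its two
   corners that are corners of neither A nor B. Otherwise a side of one
   rectangle cuts through the other, and [sep] vanishes on that side. The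
   contact point is the midpoint of the zero line within the box. *)
Definition sep (A B : rect) (p : R * R) : R :=
  let b1 := Rltb (x1 A) (x1 B) in let b2 := Rltb (x2 A) (x2 B) in
  let c1 := Rltb (y1 A) (y1 B) in let c2 := Rltb (y2 A) (y2 B) in
  let xa := if b1 then x1 B else x1 A in
  let xb := if b2 then x2 A else x2 B in
  let ya := if c1 then y1 B else y1 A in
  let yb := if c2 then y2 A else y2 B in
  let px := fst p in let py := snd p in
  match b1, b2, c1, c2 with
  | true, true, true, true => (yb-ya)*(px-xa) + (xb-xa)*(py-yb)
  | false, false, false, false => - ((yb-ya)*(px-xa) + (xb-xa)*(py-yb))
  | true, true, false, false => (yb-ya)*(px-xa) - (xb-xa)*(py-ya)
  | false, false, true, true => - ((yb-ya)*(px-xa) - (xb-xa)*(py-ya))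
  | _, _, false, true => if b1 then px - xa else xb - px
  | _, _, true, false => if b1 then px - xb else xa - px
  | false, true, _, _ => if c1 then py - ya else yb - py
  | true, false, _, _ => if c1 then py - yb else ya - py
  end.

Definition contact (A B : rect) : R * R :=
  let b1 := Rltb (x1 A) (x1 B) in let b2 := Rltb (x2 A) (x2 B) in
  let c1 := Rltb (y1 A) (y1 B) in let c2 := Rltb (y2 A) (y2 B) in
  let xa := if b1 then x1 B else x1 A in
  let xb := if b2 then x2 A else x2 B in
  let ya := if c1 then y1 B else y1 A in
  let yb := if c2 then y2 A else y2 B in
  match b1, b2, c1, c2 with
  | true, true, true, true | false, false, false, false
  | true, true, false, false | false, false, true, true => ((xa+xb)/2, (ya+yb)/2)
  | _, _, false, true => (if b1 then xa else xb, (ya+yb)/2)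
  | _, _, true, false => (if b1 then xb else xa, (ya+yb)/2)
  | false, true, _, _ => ((xa+xb)/2, if c1 then ya else yb)
  | true, false, _, _ => ((xa+xb)/2, if c1 then yb else ya)
  end.

Ltac compare_endpoints A B :=
  destruct (RltbP (x1 A) (x1 B)) as [[E1 q1]|[E1 q1]]; rewrite ?E1;
  destruct (RltbP (x2 A) (x2 B)) as [[E2 q2]|[E2 q2]]; rewrite ?E2;
  destruct (RltbP (y1 A) (y1 B)) as [[E3 q3]|[E3 q3]]; rewrite ?E3;
  destruct (RltbP (y2 A) (y2 B)) as [[E4 q4]|[E4 q4]]; rewrite ?E4.

Ltac unpack_regular_pair H A B :=
  destruct H as (?&?&?&?&?&?&?&?&?&?&?&?&?&?&?&?);
  unfold nested, plus_shaped in *;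
  pose proof (x_lt A); pose proof (x_lt B); pose proof (y_lt A); pose proof (y_lt B).

Lemma sep_swap A B p : regular_pair A B -> sep B A p = - sep A B p.
Proof.
  intros H. unpack_regular_pair H A B. unfold sep.
  rewrite (Rltb_swap (x1 A)), (Rltb_swap (x2 A)), (Rltb_swap (y1 A)), (Rltb_swap (y2 A)) by auto.
  compare_endpoints A B; simpl; try ring; exfalso; lra.
Qed.

Lemma contact_sym A B : regular_pair A B -> contact B A = contact A B.
Proof.
  intros H. unpack_regular_pair H A B. unfold contact.
  rewrite (Rltb_swap (x1 A)), (Rltb_swap (x2 A)), (Rltb_swap (y1 A)), (Rltb_swap (y2 A)) by auto.
  compare_endpoints A B; simpl; try (f_equal; field); exfalso; lra.
Qed.

Lemma contact_spec A B : regular_pair A B ->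
  in_rect A (contact A B) /\ in_rect B (contact A B) /\ sep A B (contact A B) = 0.
Proof.
  intros H. unpack_regular_pair H A B. unfold contact, sep, in_rect.
  compare_endpoints A B; simpl; (split; [|split]); try (split; split; lra); try field;
    exfalso; lra.
Qed.

Lemma sep_pos_in_rect A B p : regular_pair A B ->
  in_rect A p -> sep A B p > 0 -> in_rect B p.
Proof.
  intros H. unpack_regular_pair H A B. unfold sep, in_rect. destruct p as [px py]; simpl.
  compare_endpoints A B; simpl; intros [[? ?] [? ?]] G; try (exfalso; lra);
    (split; split; [nra|nra|nra|nra]).
Qed.

Lemma sep_nonneg_in_rect A B p : regular_pair A B ->
  inside A p -> sep A B p >= 0 -> in_rect B p.
Proof.
  intros H. unpack_regular_pair H A B. unfold sep, in_rect, inside. destruct p as [px py]; simpl.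
  compare_endpoints A B; simpl; intros [[? ?] [? ?]] G; try (exfalso; lra);
    (split; split; [nra|nra|nra|nra]).
Qed.

Ltac corner_witness t :=
  exists t; simpl; split; [split; split; lra | split; [split; split; lra | nra]].

Ltac side_witness lo hi c d0 q :=
  exists lo, hi, c, d0; split; [now auto|]; split; [now auto|]; split; [lra|];
  intros d Hd; exists (q d); cbv beta; split; [simpl; split; split; lra|]; split; [simpl; lra|];
  intros L HL1 HL2 [[? ?] [? ?]]; unfold in_rect; simpl in *;
  revert HL1 HL2; unfold Rabs; destruct Rcase_abs; destruct Rcase_abs; intros;
  split; split; lra.

(* Either A ∩ B has interior points on the negative side of [sep A B], or the
   contact point lies on a side [c] of B in the axis selected by [lo], [hi], and points of A on the negative side
   arbitrarily close to that side are only contained in rectangles containing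
   the contact point, unless these rectangles have a side close to [c]. *)
Lemma sep_negative_witness A B : regular_pair A B ->
  (exists p, inside A p /\ in_rect B p /\ sep A B p < 0) \/
  (exists (lo hi : rect -> R) c d0,
     ((lo = x1 /\ hi = x2) \/ (lo = y1 /\ hi = y2)) /\ (c = lo B \/ c = hi B) /\ 0 < d0 /\
     forall d, 0 < d < d0 -> exists q, inside A q /\ sep A B q < 0 /\
       forall L : rect, d < Rabs (lo L - c) -> d < Rabs (hi L - c) ->
         in_rect L q -> in_rect L (contact A B)).
Proof.
  intros H. unpack_regular_pair H A B. unfold contact, sep, inside, in_rect.
  compare_endpoints A B; simpl;
  first
  [ exfalso; lra
  | left; first
    [ corner_witness ((3*x1 B + x2 A)/4, (3*y1 B + y2 A)/4)
    | corner_witness ((x1 A + 3*x2 B)/4, (y1 A + 3*y2 B)/4)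
    | corner_witness ((3*x1 B + x2 A)/4, (y1 A + 3*y2 B)/4)
    | corner_witness ((x1 A + 3*x2 B)/4, (3*y1 B + y2 A)/4)
    | corner_witness ((x1 B + x2 A)/2, (y1 B + y2 B)/2)
    | corner_witness ((x1 A + x2 B)/2, (y1 B + y2 B)/2)
    | corner_witness ((x1 B + x2 B)/2, (y1 B + y2 A)/2)
    | corner_witness ((x1 B + x2 B)/2, (y1 A + y2 B)/2) ]
  | right; first
    [ side_witness x1 x2 (x1 B) (x1 B - x1 A) (fun d => (x1 B - d, (y1 A + y2 A)/2))
    | side_witness x1 x2 (x2 B) (x2 A - x2 B) (fun d => (x2 B + d, (y1 A + y2 A)/2))
    | side_witness y1 y2 (y1 B) (y1 B - y1 A) (fun d => ((x1 A + x2 A)/2, y1 B - d))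
    | side_witness y1 y2 (y2 B) (y2 A - y2 B) (fun d => ((x1 A + x2 A)/2, y2 B + d)) ] ].
Qed.

Definition seg (p q : R * R) (s : R) : R * R :=
  (fst p + s * (fst q - fst p), snd p + s * (snd q - snd p)).

Lemma seg_0 p q : seg p q 0 = p.
Proof. destruct p; unfold seg; simpl; f_equal; ring. Qed.

Lemma seg_1 p q : seg p q 1 = q.
Proof. destruct q; unfold seg; simpl; f_equal; ring. Qed.

Lemma seg_inj p q a b : q <> p -> seg p q a = seg p q b -> a = b.
Proof.
  destruct p as [px py], q as [qx qy]; unfold seg; simpl. intros N E. injection E; intros E2 E1.
  destruct (Req_dec qx px) as [e1|e1].
  - destruct (Req_dec qy py) as [e2|e2]; [subst; tauto|].
    apply (Rmult_eq_reg_r (qy - py)); [lra|]. nra.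
  - apply (Rmult_eq_reg_r (qx - px)); [lra|]. nra.
Qed.

Lemma sep_seg A B p q s : sep A B (seg p q s) = sep A B p + s * (sep A B q - sep A B p).
Proof. unfold sep, seg; compare_endpoints A B; simpl; ring. Qed.

Definition bend (a m b s : R) : R :=
  if Rle_dec s (1/2) then a + 2*s*(m-a) else m + (2*s-1)*(b-m).

Definition polyline (p m q : R * R) (s : R) : R * R :=
  (bend (fst p) (fst m) (fst q) s, bend (snd p) (snd m) (snd q) s).

Lemma polyline_0 p m q : polyline p m q 0 = p.
Proof. unfold polyline, bend; destruct Rle_dec; [|lra]. destruct p; simpl; f_equal; ring. Qed.

Lemma polyline_1 p m q : polyline p m q 1 = q.
Proof. unfold polyline, bend; destruct Rle_dec; [lra|]. destruct q; simpl; f_equal; ring. Qed.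

Lemma polyline_midpoint p q s : polyline p (seg p q (1/2)) q s = seg p q s.
Proof. unfold polyline, bend, seg; destruct Rle_dec; simpl; f_equal; field. Qed.

Lemma polyline_halves p m q s : 0 <= s <= 1 ->
  (polyline p m q s = seg p m (2*s) /\ 0 <= 2*s <= 1) \/
  (polyline p m q s = seg q m (2-2*s) /\ 0 <= 2-2*s < 1).
Proof.
  intros Hs. unfold polyline, bend, seg. destruct Rle_dec.
  - left; split; auto; lra.
  - right; split; [f_equal; ring | lra].
Qed.

Lemma bend_lipschitz a m b s t :
  Rabs (bend a m b s - bend a m b t) <= 2 * (Rabs (m-a) + Rabs (b-m)) * Rabs (s-t).
Proof.
  pose proof (Rabs_pos (m-a)); pose proof (Rabs_pos (b-m)); pose proof (Rabs_pos (s-t)).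
  unfold bend. destruct (Rle_dec s (1/2)), (Rle_dec t (1/2)).
  - replace (a + 2*s*(m-a) - (a + 2*t*(m-a))) with (2*((s-t)*(m-a))) by ring.
    rewrite Rabs_mult, Rabs_mult, (Rabs_right 2) by lra. nra.
  - replace (a + 2*s*(m-a) - (m + (2*t-1)*(b-m))) with ((2*s-1)*(m-a) + -((2*t-1)*(b-m))) by ring.
    eapply Rle_trans; [apply Rabs_triang|]. rewrite Rabs_Ropp, !Rabs_mult.
    rewrite (Rabs_left1 (2*s-1)) by lra. rewrite (Rabs_right (2*t-1)) by lra.
    rewrite (Rabs_left1 (s-t)) by lra. nra.
  - replace (m + (2*s-1)*(b-m) - (a + 2*t*(m-a))) with ((2*s-1)*(b-m) + -((2*t-1)*(m-a))) by ring.
    eapply Rle_trans; [apply Rabs_triang|]. rewrite Rabs_Ropp, !Rabs_mult.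
    rewrite (Rabs_left1 (2*t-1)) by lra. rewrite (Rabs_right (2*s-1)) by lra.
    rewrite (Rabs_right (s-t)) by lra. nra.
  - replace (m + (2*s-1)*(b-m) - (m + (2*t-1)*(b-m))) with (2*((s-t)*(b-m))) by ring.
    rewrite Rabs_mult, Rabs_mult, (Rabs_right 2) by lra. nra.
Qed.

Lemma lipschitz_cont01 (g : R -> R * R) L : 0 <= L ->
  (forall s t, Rabs (fst (g s) - fst (g t)) <= L * Rabs (s - t) /\
               Rabs (snd (g s) - snd (g t)) <= L * Rabs (s - t)) ->
  cont01 g.
Proof.
  intros HL Hg t _ eps He. exists (eps / (L + 1)). split; [apply Rdiv_lt_0_compat; lra|].
  intros s _ Hst. destruct (Hg s t) as [Gx Gy].
  assert (Hd : (L + 1) * Rabs (s - t) < eps).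
  { apply (Rmult_lt_compat_l (L + 1)) in Hst; [|lra].
    replace ((L + 1) * (eps / (L + 1))) with eps in Hst by (field; lra). exact Hst. }
  pose proof (Rabs_pos (s - t)). split; nra.
Qed.

Lemma polyline_cont p m q : cont01 (polyline p m q).
Proof.
  apply (lipschitz_cont01 _ (2 * (Rabs (fst m - fst p) + Rabs (fst q - fst m)) +
                             2 * (Rabs (snd m - snd p) + Rabs (snd q - snd m)))).
  - pose proof (Rabs_pos (fst m - fst p)); pose proof (Rabs_pos (fst q - fst m));
    pose proof (Rabs_pos (snd m - snd p)); pose proof (Rabs_pos (snd q - snd m)); lra.
  - intros s t. unfold polyline; simpl.
    pose proof (bend_lipschitz (fst p) (fst m) (fst q) s t).
    pose proof (bend_lipschitz (snd p) (snd m) (snd q) s t).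
    pose proof (Rabs_pos (fst m - fst p)); pose proof (Rabs_pos (fst q - fst m));
    pose proof (Rabs_pos (snd m - snd p)); pose proof (Rabs_pos (snd q - snd m));
    pose proof (Rabs_pos (s - t)). split; nra.
Qed.

Lemma finite_positive_lower_bound (P : nat -> Prop) (f : nat -> R) n d0 : 0 < d0 ->
  (forall l, (l < n)%nat -> P l -> 0 < f l) ->
  exists d, 0 < d < d0 /\ forall l, (l < n)%nat -> P l -> d < f l.
Proof.
  intros Hd0; induction n as [|n IH]; intros Hf.
  - exists (d0/2); split; [lra|]. intros; lia.
  - destruct IH as [d [Hd Hl]]. { intros l Hl HP; apply Hf; auto; lia. }
    destruct (classic (P n)) as [Pn|Pn].
    + pose proof (Hf n (Nat.lt_succ_diag_r n) Pn).
      exists (Rmin d (f n / 2)). split.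
      * unfold Rmin; destruct Rle_dec; lra.
      * intros l Hl' HP. pose proof (Rmin_l d (f n / 2)); pose proof (Rmin_r d (f n / 2)).
        destruct (Nat.eq_dec l n) as [->|Hne]; [lra|].
        assert (Hln : (l < n)%nat) by lia. specialize (Hl l Hln HP). lra.
    + exists d. split; auto. intros l Hl' HP. destruct (Nat.eq_dec l n) as [->|Hne]; [tauto|].
      apply Hl; auto; lia.
Qed.

Lemma finite_small_step (P : nat -> Prop) (a b : nat -> R) n d0 : 0 < d0 ->
  (forall l, (l < n)%nat -> P l -> a l < 0) ->
  exists e, 0 < e < d0 /\ forall l, (l < n)%nat -> P l -> a l + e * b l < 0.
Proof.
  intros Hd0 Ha.
  destruct (finite_positive_lower_bound P (fun l => - a l / (Rabs (b l) + 1)) n d0 Hd0)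
    as [e [He Hl]].
  { intros l Hl HP. specialize (Ha l Hl HP). pose proof (Rabs_pos (b l)).
    apply Rdiv_lt_0_compat; lra. }
  exists e. split; auto. intros l Hl' HP. specialize (Hl l Hl' HP). simpl in Hl.
  pose proof (Rabs_pos (b l)); pose proof (Rle_abs (b l)).
  apply (Rmult_lt_compat_r (Rabs (b l) + 1)) in Hl; [|lra].
  replace (- a l / (Rabs (b l) + 1) * (Rabs (b l) + 1)) with (- a l) in Hl by (field; lra).
  nra.
Qed.

Lemma finite_upper_bound (f : nat -> R) n : exists K, forall l, (l < n)%nat -> f l < K.
Proof.
  induction n as [|n [K HK]].
  - exists 0; intros; lia.
  - exists (Rmax K (f n + 1)). intros l Hl.
    pose proof (Rmax_l K (f n + 1)); pose proof (Rmax_r K (f n + 1)).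
    destruct (Nat.eq_dec l n) as [->|Hne]; [lra|].
    assert (Hln : (l < n)%nat) by lia. specialize (HK l Hln). lra.
Qed.

Lemma inside_open A p v : inside A p ->
  exists d, 0 < d /\ forall e, 0 <= e < d -> inside A (fst p + e * fst v, snd p + e * snd v).
Proof.
  intros [[a1 a2] [a3 a4]].
  set (s := Rmin (Rmin (fst p - x1 A) (x2 A - fst p)) (Rmin (snd p - y1 A) (y2 A - snd p))).
  assert (Hs : 0 < s) by (unfold s; repeat apply Rmin_glb_lt; lra).
  assert (Hslack : s <= fst p - x1 A /\ s <= x2 A - fst p /\ s <= snd p - y1 A /\ s <= y2 A - snd p).
  { unfold s; pose proof (Rmin_l (Rmin (fst p - x1 A) (x2 A - fst p)) (Rmin (snd p - y1 A) (y2 A - snd p)));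
    pose proof (Rmin_r (Rmin (fst p - x1 A) (x2 A - fst p)) (Rmin (snd p - y1 A) (y2 A - snd p)));
    pose proof (Rmin_l (fst p - x1 A) (x2 A - fst p)); pose proof (Rmin_r (fst p - x1 A) (x2 A - fst p));
    pose proof (Rmin_l (snd p - y1 A) (y2 A - snd p)); pose proof (Rmin_r (snd p - y1 A) (y2 A - snd p)); lra. }
  set (w := Rabs (fst v) + Rabs (snd v) + 1).
  assert (Hw : 0 < w) by (unfold w; pose proof (Rabs_pos (fst v)); pose proof (Rabs_pos (snd v)); lra).
  exists (s / w). split; [apply Rdiv_lt_0_compat; lra|]. intros e He.
  assert (Hew : e * w < s).
  { assert (Hlt : e < s / w) by lra. apply (Rmult_lt_compat_r w) in Hlt; [|lra].
    replace (s / w * w) with s in Hlt by (field; lra). lra. }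
  pose proof (Rle_abs (fst v)); pose proof (Rle_abs (- fst v)); pose proof (Rle_abs (snd v));
  pose proof (Rle_abs (- snd v)). rewrite !Rabs_Ropp in *. unfold w in Hew.
  unfold inside; simpl; split; split; nra.
Qed.

Section Cells.

Variables (n : nat) (F : nat -> rect).
Hypothesis Hgp : general_position n F.
Hypothesis Htf : triangle_free n F.
Hypothesis Hnc : non_crossing n F.

Definition leaf (i : nat) : Prop := exists h, (h < n)%nat /\ h <> i /\ nested (F i) (F h).

Definition regular (i j : nat) : Prop :=
  (i < n)%nat /\ (j < n)%nat /\ i <> j /\ intersect (F i) (F j) /\
  ~ nested (F i) (F j) /\ ~ nested (F j) (F i).

Definition cell (i : nat) (p : R * R) : Prop :=
  inside (F i) p /\ forall l, regular i l -> sep (F i) (F l) p < 0.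

Definition closed_cell (i : nat) (p : R * R) : Prop :=
  in_rect (F i) p /\ forall l, regular i l -> sep (F i) (F l) p <= 0.

Lemma no_common_point i j k p : (i < n)%nat -> (j < n)%nat -> (k < n)%nat ->
  i <> j -> j <> k -> i <> k ->
  in_rect (F i) p -> in_rect (F j) p -> in_rect (F k) p -> False.
Proof. intros. apply (Htf i j k); auto. repeat split; exists p; auto. Qed.

Lemma regular_sym i j : regular i j -> regular j i.
Proof. intros (?&?&?&?&?&?); repeat split; auto. apply intersect_sym; auto. Qed.

Lemma regular_pair_of_regular i j : regular i j -> regular_pair (F i) (F j).
Proof.
  intros (Hi&Hj&Hij&HI&C1&C2).
  destruct (Hgp i j Hi Hj Hij) as (?&?&?&?&?&?&?&?).
  pose proof HI as HI'. apply intersect_iff in HI'. destruct HI' as (?&?&?&?).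
  repeat split; auto; try lra.
  - intro P. apply (Hnc i j Hi Hj Hij). apply plus_shaped_cross; auto.
  - intro P. apply (Hnc j i Hj Hi (not_eq_sym Hij)). apply plus_shaped_cross; auto.
    apply intersect_sym; auto.
Qed.

Lemma regular_bounds i j : regular i j -> (i < n)%nat /\ (j < n)%nat /\ i <> j.
Proof. intros (?&?&?&_); auto. Qed.

Lemma regular_not_leaf i l : regular i l -> ~ leaf l.
Proof.
  intros (Hi&Hl&Hil&[p [P1 P2]]&C1&C2) [h (Hh&Hne&C)].
  destruct (classic (h = i)) as [->|Hhi].
  - apply C2; auto.
  - apply (no_common_point i l h p); auto. apply (nested_in_rect _ _ _ C P2).
Qed.

Lemma edge_regular i j : (i < n)%nat -> (j < n)%nat -> ig_edge F i j ->
  ~ leaf i -> ~ leaf j -> regular i j.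
Proof.
  intros Hi Hj [Hij HI] Li Lj. repeat split; auto.
  - intro C; apply Li; exists j; auto.
  - intro C; apply Lj; exists i; auto.
Qed.

Lemma host_unique j h l : (j < n)%nat -> (h < n)%nat -> h <> j -> nested (F j) (F h) ->
  (l < n)%nat -> l <> j -> intersect (F l) (F j) -> l = h.
Proof.
  intros Hj Hh Hhj C Hl Hlj [p [P1 P2]].
  destruct (classic (l = h)) as [|Hlh]; auto. exfalso.
  apply (no_common_point l j h p); auto. apply (nested_in_rect _ _ _ C P2).
Qed.

Lemma host_not_leaf j h : (j < n)%nat -> (h < n)%nat -> h <> j -> nested (F j) (F h) ->
  ~ leaf h.
Proof.
  intros Hj Hh Hhj C [h' (Hh'&Hne&C')].
  destruct (classic (h' = j)) as [->|Hj'].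
  - unfold nested in *; lra.
  - apply (no_common_point j h h' (x1 (F j), y1 (F j))); auto.
    + apply corner_in_rect.
    + apply (nested_in_rect _ _ _ C), corner_in_rect.
    + apply (nested_in_rect _ _ _ C'), (nested_in_rect _ _ _ C), corner_in_rect.
Qed.

Lemma cells_disjoint i k p : (i < n)%nat -> (k < n)%nat -> i <> k -> ~ leaf i -> ~ leaf k ->
  cell i p -> cell k p -> False.
Proof.
  intros Hi Hk Hik Li Lk [Ii Gi] [Ik Gk].
  assert (R : regular i k).
  { repeat split; auto.
    - exists p; split; apply inside_in_rect; auto.
    - intro C. apply Li. exists k; auto.
    - intro C. apply Lk. exists i; auto. }
  pose proof (Gi k R) as Sik. pose proof (Gk i (regular_sym _ _ R)) as Ski.
  rewrite (sep_swap _ _ _ (regular_pair_of_regular _ _ R)) in Ski. lra.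
Qed.

Lemma cell_closed_cell i p : cell i p -> closed_cell i p.
Proof.
  intros [I G]; split; [apply inside_in_rect; auto|]. intros l R; specialize (G l R); lra.
Qed.

Lemma cell_seg i p q s : cell i p -> closed_cell i q -> 0 <= s < 1 -> cell i (seg p q s).
Proof.
  intros [Ip Gp] [Iq Gq] Hs. unfold inside, in_rect in *. split.
  - unfold inside, seg; simpl. split; split; nra.
  - intros l R. rewrite sep_seg. specialize (Gp l R). specialize (Gq l R). nra.
Qed.

Lemma cell_convex i p q s : cell i p -> cell i q -> 0 <= s <= 1 -> cell i (seg p q s).
Proof.
  intros Up Uq Hs. destruct (Req_dec s 1) as [->|Hs1].
  - rewrite seg_1; auto.
  - apply cell_seg; auto. apply cell_closed_cell; auto. lra.
Qed.

Lemma contact_closed_cell i j : regular i j -> closed_cell i (contact (F i) (F j)).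
Proof.
  intros R. pose proof (regular_pair_of_regular _ _ R) as P.
  destruct (contact_spec _ _ P) as (T1&T2&T3). split; auto.
  intros l Rl. destruct (classic (l = j)) as [->|Hl]; [lra|].
  destruct (Rle_lt_dec (sep (F i) (F l) (contact (F i) (F j))) 0) as [|Hg]; auto.
  exfalso. pose proof (sep_pos_in_rect _ _ _ (regular_pair_of_regular _ _ Rl) T1 Hg).
  destruct (regular_bounds _ _ R) as (?&?&?), (regular_bounds _ _ Rl) as (?&?&?).
  apply (no_common_point i j l (contact (F i) (F j))); auto.
Qed.

Lemma contact_not_in_cell i j k : regular i j -> (k < n)%nat -> ~ cell k (contact (F i) (F j)).
Proof.
  intros R Hk [Ik Gk]. pose proof (regular_pair_of_regular _ _ R) as P.
  destruct (contact_spec _ _ P) as (T1&T2&T3).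
  destruct (classic (k = i)) as [->|Hki].
  { specialize (Gk j R). lra. }
  destruct (classic (k = j)) as [->|Hkj].
  { specialize (Gk i (regular_sym _ _ R)). rewrite (sep_swap _ _ _ P), T3 in Gk. lra. }
  destruct (regular_bounds _ _ R) as (?&?&?).
  apply (no_common_point i j k (contact (F i) (F j))); auto. apply inside_in_rect; auto.
Qed.

Lemma contact_inj i j k l : regular i j -> regular k l ->
  contact (F i) (F j) = contact (F k) (F l) -> (i = k /\ j = l) \/ (i = l /\ j = k).
Proof.
  intros R1 R2 E.
  destruct (contact_spec _ _ (regular_pair_of_regular _ _ R1)) as (T1&T2&_).
  destruct (contact_spec _ _ (regular_pair_of_regular _ _ R2)) as (T3&T4&_).
  rewrite <- E in T3, T4.
  destruct (regular_bounds _ _ R1) as (?&?&?), (regular_bounds _ _ R2) as (?&?&?).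
  destruct (classic (k <> i /\ k <> j)) as [[e1 e2]|e1].
  { exfalso; apply (no_common_point i j k (contact (F i) (F j))); auto. }
  destruct (classic (l <> i /\ l <> j)) as [[e3 e4]|e3].
  { exfalso; apply (no_common_point i j l (contact (F i) (F j))); auto. }
  apply not_and_or in e1; apply not_and_or in e3.
  destruct e1 as [e1|e1]; apply NNPP in e1; destruct e3 as [e3|e3]; apply NNPP in e3;
    subst; auto; tauto.
Qed.

(* Only [j] needs to be checked: a point on the nonnegative side of another
   separator of [i] would be shared by three rectangles. *)
Lemma cell_of_negative_point i j p : regular i j -> inside (F i) p -> sep (F i) (F j) p < 0 ->
  (forall l, regular i l -> l <> j -> in_rect (F l) p -> False) -> cell i p.
Proof.
  intros R Ip Gp Hl. split; auto. intros l Rl.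
  destruct (classic (l = j)) as [->|Hlj]; auto.
  destruct (Rlt_le_dec (sep (F i) (F l) p) 0) as [|Hg]; auto. exfalso.
  apply (Hl l Rl Hlj), (sep_nonneg_in_rect _ _ p (regular_pair_of_regular _ _ Rl)); auto; lra.
Qed.

Lemma side_coordinates_apart (lo hi : rect -> R) c j l : (j < n)%nat -> (l < n)%nat -> l <> j ->
  (lo = x1 /\ hi = x2) \/ (lo = y1 /\ hi = y2) -> c = lo (F j) \/ c = hi (F j) ->
  0 < Rmin (Rabs (lo (F l) - c)) (Rabs (hi (F l) - c)).
Proof.
  intros Hj Hl Hlj Hax Hc. destruct (Hgp l j Hl Hj Hlj) as (a1&a2&a3&a4&a5&a6&a7&a8).
  apply Rmin_glb_lt; apply Rabs_pos_lt;
    destruct Hax as [[-> ->]|[-> ->]]; destruct Hc as [-> | ->]; lra.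
Qed.

Lemma cell_nonempty i : (i < n)%nat -> ~ leaf i -> exists p, cell i p.
Proof.
  intros Hi Li.
  destruct (classic (exists j, regular i j)) as [[j R]|NR].
  2:{ exists ((x1 (F i) + x2 (F i))/2, (y1 (F i) + y2 (F i))/2). split.
      - pose proof (x_lt (F i)); pose proof (y_lt (F i)). unfold inside; simpl; split; split; lra.
      - intros l Rl. exfalso. apply NR; eauto. }
  pose proof (regular_pair_of_regular _ _ R) as P.
  destruct (contact_spec _ _ P) as (T1&T2&_).
  destruct (regular_bounds _ _ R) as (_&Hj&Hij).
  destruct (sep_negative_witness _ _ P)
    as [[p (Ip&Jp&Gp)]|(lo&hi&c&d0&Hax&Hc&Hd0&Hq)].
  - exists p. apply (cell_of_negative_point i j); auto. intros l Rl Hlj Hpl.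
    destruct (regular_bounds _ _ Rl) as (_&?&?).
    apply (no_common_point i j l p); auto. apply inside_in_rect; auto.
  - destruct (finite_positive_lower_bound (fun l => l <> j)
      (fun l => Rmin (Rabs (lo (F l) - c)) (Rabs (hi (F l) - c))) n d0 Hd0) as [d [Hd Hfar]].
    { intros l Hl Hlj. apply (side_coordinates_apart lo hi c j l); auto. }
    destruct (Hq d Hd) as [q (Iq&Gq&Lq)].
    exists q. apply (cell_of_negative_point i j); auto. intros l Rl Hlj Hql.
    destruct (regular_bounds _ _ Rl) as (_&Hl&?).
    specialize (Hfar l Hl Hlj); simpl in Hfar.
    pose proof (Rmin_l (Rabs (lo (F l) - c)) (Rabs (hi (F l) - c))).
    pose proof (Rmin_r (Rabs (lo (F l) - c)) (Rabs (hi (F l) - c))).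
    apply (no_common_point i j l (contact (F i) (F j))); auto. apply Lq; auto; lra.
Qed.

Lemma cell_open i p v : cell i p ->
  exists e, 0 < e /\ cell i (fst p + e * fst v, snd p + e * snd v).
Proof.
  intros [Ip Gp]. destruct (inside_open _ _ v Ip) as [d [Hd Hin]].
  set (q := (fst p + fst v, snd p + snd v)).
  destruct (finite_small_step (regular i) (fun l => sep (F i) (F l) p)
    (fun l => sep (F i) (F l) q - sep (F i) (F l) p) n d Hd) as [e [He Hl]].
  { intros l _ R; apply Gp; auto. }
  exists e. split; [lra|].
  replace (fst p + e * fst v, snd p + e * snd v) with (seg p q e)
    by (unfold seg, q; simpl; f_equal; ring).
  split.
  - replace (seg p q e) with (fst p + e * fst v, snd p + e * snd v)
      by (unfold seg, q; simpl; f_equal; ring). apply Hin; lra.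
  - intros l R. rewrite sep_seg. apply Hl; auto. apply (regular_bounds _ _ R).
Qed.

(* Otherwise, by convexity, the nearer of the two points would lie in the open cell. *)
Lemma cell_boundary_ray_unique i p t1 t2 a b :
  cell i p -> closed_cell i t1 -> closed_cell i t2 -> ~ cell i t1 -> ~ cell i t2 ->
  0 < a <= 1 -> 0 < b <= 1 -> seg p t1 a = seg p t2 b -> t1 = t2.
Proof.
  intros Up S1 S2 N1 N2 Ha Hb E.
  destruct p as [px py], t1 as [ux uy], t2 as [wx wy]. unfold seg in E; simpl in E.
  injection E; intros Ey Ex.
  destruct (Rlt_le_dec a b) as [Hab|Hab].
  - exfalso. apply N2. replace (wx, wy) with (seg (px, py) (ux, uy) (a / b)).
    + apply cell_seg; auto. split; [apply Rlt_le, Rdiv_lt_0_compat; lra|].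
      apply (Rmult_lt_reg_r b); [lra|]. unfold Rdiv; rewrite Rmult_assoc, Rinv_l; lra.
    + unfold seg; simpl. f_equal; apply (Rmult_eq_reg_l b); try lra; field_simplify; nra.
  - destruct (Rlt_le_dec b a) as [Hba|Hba].
    + exfalso. apply N1. replace (ux, uy) with (seg (px, py) (wx, wy) (b / a)).
      * apply cell_seg; auto. split; [apply Rlt_le, Rdiv_lt_0_compat; lra|].
        apply (Rmult_lt_reg_r a); [lra|]. unfold Rdiv; rewrite Rmult_assoc, Rinv_l; lra.
      * unfold seg; simpl. f_equal; apply (Rmult_eq_reg_l a); try lra; field_simplify; nra.
    + assert (a = b) by lra. subst b.
      f_equal; apply (Rmult_eq_reg_l a); nra.
Qed.

Definition center (i : nat) : R * R := epsilon (inhabits (0, 0)) (cell i).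

Lemma center_in_cell i : (i < n)%nat -> ~ leaf i -> cell i (center i).
Proof. intros Hi Li. unfold center. apply epsilon_spec, cell_nonempty; auto. Qed.

Definition host (j : nat) : nat :=
  epsilon (inhabits 0%nat) (fun h => (h < n)%nat /\ h <> j /\ nested (F j) (F h)).

Lemma host_spec j : leaf j -> (host j < n)%nat /\ host j <> j /\ nested (F j) (F (host j)).
Proof. intros L. unfold host. apply epsilon_spec, L. Qed.

Lemma host_of_leaf_not_leaf j : (j < n)%nat -> leaf j -> (host j < n)%nat /\ ~ leaf (host j).
Proof.
  intros Hj L. destruct (host_spec j L) as (Hh&Hhj&C). split; auto.
  apply (host_not_leaf j); auto.
Qed.

Definition slope_bound (h : nat) : R :=
  epsilon (inhabits 0) (fun K => forall l, regular h l ->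
    0 < fst (contact (F h) (F l)) - fst (center h) ->
    snd (contact (F h) (F l)) - snd (center h) < K * (fst (contact (F h) (F l)) - fst (center h))).

Lemma slope_bound_spec h l : regular h l ->
  0 < fst (contact (F h) (F l)) - fst (center h) ->
  snd (contact (F h) (F l)) - snd (center h) <
    slope_bound h * (fst (contact (F h) (F l)) - fst (center h)).
Proof.
  revert l. unfold slope_bound. apply epsilon_spec.
  destruct (finite_upper_bound (fun l => (snd (contact (F h) (F l)) - snd (center h)) /
                                         (fst (contact (F h) (F l)) - fst (center h))) n)
    as [K HK].
  exists K. intros l R Hx. specialize (HK l (proj1 (proj2 (regular_bounds _ _ R)))).
  apply (Rmult_lt_compat_r (fst (contact (F h) (F l)) - fst (center h))) in HK; auto.
  unfold Rdiv in HK; rewrite Rmult_assoc, Rinv_l in HK; lra.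
Qed.

(* Leaves are drawn on rays from the center of their host whose slopes are
   pairwise distinct (thanks to [INR l]) and exceed those of all spokes. *)
Definition leaf_point (l : nat) (t : R) : R * R :=
  (fst (center (host l)) + t, snd (center (host l)) + t * (slope_bound (host l) + INR l)).

Definition leaf_reach (l : nat) : R :=
  epsilon (inhabits 0) (fun e => 0 < e /\ cell (host l) (leaf_point l e)).

Lemma leaf_point_in_cell l : (l < n)%nat -> leaf l ->
  0 < leaf_reach l /\ forall t, 0 <= t <= leaf_reach l -> cell (host l) (leaf_point l t).
Proof.
  intros Hl L. destruct (host_of_leaf_not_leaf l Hl L) as [Hh NLh].
  pose proof (center_in_cell _ Hh NLh) as Uc.
  assert (Hreach : 0 < leaf_reach l /\ cell (host l) (leaf_point l (leaf_reach l))).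
  { unfold leaf_reach. apply epsilon_spec.
    destruct (cell_open _ _ (1, slope_bound (host l) + INR l) Uc) as [e [He Ue]].
    exists e. split; auto. unfold leaf_point. simpl in Ue. rewrite Rmult_1_r in Ue. exact Ue. }
  destruct Hreach as [Hr Ur]. split; auto. intros t Ht.
  replace (leaf_point l t) with (seg (center (host l)) (leaf_point l (leaf_reach l)) (t / leaf_reach l))
    by (unfold seg, leaf_point; simpl; f_equal; field; lra).
  apply cell_convex; auto. split.
  - apply Rmult_le_pos; [lra|]. apply Rlt_le, Rinv_0_lt_compat; lra.
  - apply (Rmult_le_reg_r (leaf_reach l)); [lra|].
    unfold Rdiv; rewrite Rmult_assoc, Rinv_l; lra.
Qed.

Definition spoke (e e' : nat) (a : R) : R * R := seg (center e) (contact (F e) (F e')) a.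

Lemma regular_center_in_cell e e' : regular e e' -> (e < n)%nat /\ ~ leaf e /\ cell e (center e).
Proof.
  intros R. destruct (regular_bounds _ _ R) as (He&_&_).
  assert (Le : ~ leaf e) by (apply (regular_not_leaf e' e), regular_sym; auto).
  split; [|split]; auto. apply center_in_cell; auto.
Qed.

Lemma spoke_in_cell e e' a : regular e e' -> 0 <= a < 1 -> cell e (spoke e e' a).
Proof.
  intros R Ha. apply cell_seg; auto.
  - apply (regular_center_in_cell e e' R).
  - apply contact_closed_cell; auto.
Qed.

Lemma contact_neq_center e e' k : regular e e' -> (k < n)%nat -> ~ leaf k ->
  contact (F e) (F e') <> center k.
Proof.
  intros R Hk Lk Eq. apply (contact_not_in_cell e e' k R Hk). rewrite Eq.
  apply center_in_cell; auto.
Qed.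

Lemma spoke_not_center e e' a k : regular e e' -> 0 < a <= 1 -> (k < n)%nat -> ~ leaf k ->
  spoke e e' a <> center k.
Proof.
  intros R Ha Hk Lk Eq. destruct (regular_center_in_cell e e' R) as (He&Le&Ue).
  destruct (Req_dec a 1) as [->|Ha1].
  - unfold spoke in Eq; rewrite seg_1 in Eq. apply (contact_neq_center e e' k); auto.
  - destruct (Nat.eq_dec k e) as [->|Hke].
    + unfold spoke in Eq. rewrite <- (seg_0 (center e) (contact (F e) (F e'))) in Eq at 2.
      apply seg_inj in Eq; [lra|]. apply contact_neq_center; auto.
    + apply (cells_disjoint e k (center k)); auto.
      * rewrite <- Eq. apply spoke_in_cell; auto; lra.
      * apply center_in_cell; auto.
Qed.

(* A spoke and a leaf ray from the same center leave it with different slopes. *)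
Lemma spoke_neq_leaf_point e e' a l c : regular e e' -> 0 < a -> 0 < c -> host l = e ->
  spoke e e' a <> leaf_point l c.
Proof.
  intros R Ha Hc Hhost Eq. unfold spoke, seg, leaf_point in Eq. rewrite Hhost in Eq.
  injection Eq; intros Ey Ex. pose proof (pos_INR l).
  assert (Hx : 0 < fst (contact (F e) (F e')) - fst (center e)) by nra.
  pose proof (slope_bound_spec e e' R Hx). nra.
Qed.

Lemma spoke_not_leaf_point e e' a l c : regular e e' -> 0 < a <= 1 ->
  (l < n)%nat -> leaf l -> 0 < c <= leaf_reach l -> spoke e e' a <> leaf_point l c.
Proof.
  intros R Ha Hl L Hc Eq.
  destruct (host_of_leaf_not_leaf l Hl L) as [Hh NLh].
  destruct (leaf_point_in_cell l Hl L) as (_&Useg).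
  pose proof (Useg c ltac:(lra)) as Ul.
  destruct (regular_center_in_cell e e' R) as (He&Le&_).
  destruct (Req_dec a 1) as [->|Ha1].
  - unfold spoke in Eq; rewrite seg_1 in Eq.
    apply (contact_not_in_cell e e' (host l) R Hh). rewrite Eq; auto.
  - destruct (Nat.eq_dec (host l) e) as [Hhe|Hne].
    + apply (spoke_neq_leaf_point e e' a l c); auto; lra.
    + apply (cells_disjoint e (host l) (leaf_point l c)); auto.
      rewrite <- Eq. apply spoke_in_cell; auto; lra.
Qed.

Lemma leaf_point_inj l l' c c' : (l < n)%nat -> leaf l -> 0 < c <= leaf_reach l ->
  (l' < n)%nat -> leaf l' -> 0 < c' <= leaf_reach l' ->
  leaf_point l c = leaf_point l' c' -> l = l' /\ c = c'.
Proof.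
  intros Hl L Hc Hl' L' Hc' Eq.
  destruct (host_of_leaf_not_leaf l Hl L) as [Hh NLh].
  destruct (host_of_leaf_not_leaf l' Hl' L') as [Hh' NLh'].
  destruct (leaf_point_in_cell l Hl L) as (_&Useg).
  destruct (leaf_point_in_cell l' Hl' L') as (_&Useg').
  assert (Hhh : host l = host l').
  { destruct (Nat.eq_dec (host l) (host l')) as [|Hne]; auto. exfalso.
    apply (cells_disjoint (host l) (host l') (leaf_point l c)); auto.
    - apply Useg; lra.
    - rewrite Eq. apply Useg'; lra. }
  unfold leaf_point in Eq. rewrite <- Hhh in Eq. injection Eq; intros Ey Ex.
  assert (c = c') by lra. subst c'. split; auto.
  apply INR_eq. apply (Rmult_eq_reg_l c); lra.
Qed.

Lemma leaf_point_not_center l c k : (l < n)%nat -> leaf l -> 0 < c <= leaf_reach l ->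
  (k < n)%nat -> ~ leaf k -> leaf_point l c <> center k.
Proof.
  intros Hl L Hc Hk Lk Eq.
  destruct (host_of_leaf_not_leaf l Hl L) as [Hh NLh].
  destruct (leaf_point_in_cell l Hl L) as (_&Useg).
  destruct (Nat.eq_dec k (host l)) as [->|Hne].
  - apply (f_equal fst) in Eq. unfold leaf_point in Eq. simpl in Eq. lra.
  - apply (cells_disjoint k (host l) (center k)); auto.
    + apply center_in_cell; auto.
    + rewrite <- Eq. apply Useg; lra.
Qed.

Lemma spoke_inj e e' a f f' b : regular e e' -> 0 < a <= 1 -> regular f f' -> 0 < b <= 1 ->
  spoke e e' a = spoke f f' b -> (e = f /\ e' = f') \/ (e = f' /\ e' = f).
Proof.
  intros R1 Ha R2 Hb Eq.
  destruct (regular_center_in_cell e e' R1) as (He&Le&Ue).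
  destruct (regular_center_in_cell f f' R2) as (Hf&Lf&Uf).
  destruct (Req_dec a 1) as [->|Ha1]; destruct (Req_dec b 1) as [->|Hb1];
    unfold spoke in Eq; rewrite ?seg_1 in Eq.
  - apply contact_inj; auto.
  - exfalso. apply (contact_not_in_cell e e' f R1 Hf). rewrite Eq.
    apply spoke_in_cell; auto; lra.
  - exfalso. apply (contact_not_in_cell f f' e R2 He). rewrite <- Eq.
    apply spoke_in_cell; auto; lra.
  - destruct (Nat.eq_dec e f) as [<-|Hne].
    + apply contact_inj; auto.
      apply (cell_boundary_ray_unique e (center e) _ _ a b); auto;
        first [apply contact_closed_cell; auto | apply contact_not_in_cell; auto].
    + exfalso. apply (cells_disjoint e f (spoke e e' a)); auto.
      * apply spoke_in_cell; auto; lra.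
      * unfold spoke; rewrite Eq. apply spoke_in_cell; auto; lra.
Qed.

Lemma opposite_spokes_disjoint i j a b : regular i j -> 0 <= a <= 1 -> 0 <= b < 1 ->
  spoke i j a <> spoke j i b.
Proof.
  intros R Ha Hb Eq.
  destruct (regular_center_in_cell i j R) as (Hi&Li&Ui).
  destruct (regular_bounds _ _ R) as (_&Hj&Hij).
  assert (Uj : cell j (spoke j i b)) by (apply spoke_in_cell; auto; apply regular_sym; auto).
  destruct (Req_dec a 1) as [->|Ha1].
  - unfold spoke in Eq; rewrite seg_1 in Eq.
    apply (contact_not_in_cell i j j R Hj). rewrite Eq; auto.
  - apply (cells_disjoint i j (spoke i j a)); auto.
    + apply (regular_not_leaf i j R).
    + apply spoke_in_cell; auto; lra.
    + rewrite Eq; auto.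
Qed.

Definition vertex (i : nat) : R * R :=
  if excluded_middle_informative (leaf i) then leaf_point i (leaf_reach i) else center i.

Definition arc_bend (i j : nat) : R * R :=
  if excluded_middle_informative (leaf i \/ leaf j) then seg (vertex i) (vertex j) (1/2)
  else contact (F i) (F j).

Definition edge_arc (i j : nat) : R -> R * R := polyline (vertex i) (arc_bend i j) (vertex j).

Lemma vertex_leaf i : leaf i -> vertex i = leaf_point i (leaf_reach i).
Proof. intros L; unfold vertex; destruct excluded_middle_informative; tauto. Qed.

Lemma vertex_not_leaf i : ~ leaf i -> vertex i = center i.
Proof. intros L; unfold vertex; destruct excluded_middle_informative; tauto. Qed.

Lemma vertex_inj i j : (i < n)%nat -> (j < n)%nat -> vertex i = vertex j -> i = j.
Proof.
  intros Hi Hj Eq.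
  destruct (classic (leaf i)) as [Li|Li]; destruct (classic (leaf j)) as [Lj|Lj];
    rewrite ?(vertex_leaf i), ?(vertex_not_leaf i), ?(vertex_leaf j), ?(vertex_not_leaf j) in Eq
      by auto.
  - destruct (leaf_point_in_cell i Hi Li) as [Ri _], (leaf_point_in_cell j Hj Lj) as [Rj _].
    apply (leaf_point_inj i j (leaf_reach i) (leaf_reach j)); auto; lra.
  - exfalso. destruct (leaf_point_in_cell i Hi Li) as [Ri _].
    apply (leaf_point_not_center i (leaf_reach i) j); auto; lra.
  - exfalso. destruct (leaf_point_in_cell j Hj Lj) as [Rj _].
    apply (leaf_point_not_center j (leaf_reach j) i); auto; lra.
  - destruct (Nat.eq_dec i j) as [|Hne]; auto. exfalso.
    apply (cells_disjoint i j (center i)); auto; [|rewrite Eq]; apply center_in_cell; auto.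
Qed.

Lemma edge_arc_to_leaf i j s : (i < n)%nat -> (j < n)%nat -> ig_edge F i j -> leaf j ->
  host j = i /\ edge_arc i j s = leaf_point j (s * leaf_reach j).
Proof.
  intros Hi Hj [Hij HI] Lj. destruct (host_spec j Lj) as (Hh&Hhj&C).
  assert (Ei : i = host j) by (apply (host_unique j (host j) i); auto).
  destruct (host_of_leaf_not_leaf j Hj Lj) as [_ NLh].
  split; [auto|]. unfold edge_arc, arc_bend.
  destruct excluded_middle_informative as [_|N]; [|tauto].
  rewrite polyline_midpoint, (vertex_leaf j Lj), Ei, (vertex_not_leaf _ NLh).
  unfold seg, leaf_point; simpl; f_equal; ring.
Qed.

Lemma edge_arc_from_leaf i j s : (i < n)%nat -> (j < n)%nat -> ig_edge F i j -> leaf i ->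
  host i = j /\ edge_arc i j s = leaf_point i ((1 - s) * leaf_reach i).
Proof.
  intros Hi Hj [Hij HI] Li. destruct (host_spec i Li) as (Hh&Hhi&C).
  assert (Ej : j = host i)
    by (apply (host_unique i (host i) j); auto; apply intersect_sym; auto).
  destruct (host_of_leaf_not_leaf i Hi Li) as [_ NLh].
  split; [auto|]. unfold edge_arc, arc_bend.
  destruct excluded_middle_informative as [_|N]; [|tauto].
  rewrite polyline_midpoint, (vertex_leaf i Li), Ej, (vertex_not_leaf _ NLh).
  unfold seg, leaf_point; simpl; f_equal; ring.
Qed.

Lemma edge_arc_regular i j s : regular i j -> ~ leaf i -> ~ leaf j -> 0 <= s <= 1 ->
  (edge_arc i j s = spoke i j (2*s) /\ 0 <= 2*s <= 1) \/
  (edge_arc i j s = spoke j i (2-2*s) /\ 0 <= 2-2*s < 1).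
Proof.
  intros R Li Lj Hs. unfold edge_arc, arc_bend.
  destruct excluded_middle_informative as [[?|?]|_]; [tauto|tauto|].
  rewrite (vertex_not_leaf i Li), (vertex_not_leaf j Lj). unfold spoke.
  rewrite (contact_sym (F i) (F j)) by (apply regular_pair_of_regular; auto).
  apply polyline_halves; auto.
Qed.

Lemma edge_arc_interior i j s : (i < j)%nat -> (j < n)%nat -> ig_edge F i j -> 0 < s < 1 ->
  (exists e e' a, regular e e' /\ 0 < a <= 1 /\ edge_arc i j s = spoke e e' a /\
     ((e = i /\ e' = j) \/ (e = j /\ e' = i))) \/
  (exists l c, (l < n)%nat /\ leaf l /\ 0 < c < leaf_reach l /\ edge_arc i j s = leaf_point l c /\
     ((l = i /\ host l = j) \/ (l = j /\ host l = i))).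
Proof.
  intros Hij Hj Eij Hs. assert (Hi : (i < n)%nat) by lia.
  destruct (classic (leaf j)) as [Lj|Lj]; [|destruct (classic (leaf i)) as [Li|Li]].
  - right. destruct (edge_arc_to_leaf i j s Hi Hj Eij Lj) as [Hh Ea].
    destruct (leaf_point_in_cell j Hj Lj) as [Hr _].
    exists j, (s * leaf_reach j). split; [|split; [|split; [split; nra|split]]]; auto.
  - right. destruct (edge_arc_from_leaf i j s Hi Hj Eij Li) as [Hh Ea].
    destruct (leaf_point_in_cell i Hi Li) as [Hr _].
    exists i, ((1 - s) * leaf_reach i). split; [|split; [|split; [split; nra|split]]]; auto.
  - left. assert (R : regular i j) by (apply edge_regular; auto).
    destruct (edge_arc_regular i j s R Li Lj ltac:(lra)) as [[Ea Ha]|[Ea Ha]].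
    + exists i, j, (2*s). split; [|split; [lra|split]]; auto.
    + exists j, i, (2-2*s). split; [apply regular_sym; auto|split; [lra|split]]; auto.
Qed.

Lemma edge_arc_injective i j s t : (i < j)%nat -> (j < n)%nat -> ig_edge F i j ->
  0 <= s <= 1 -> 0 <= t <= 1 -> edge_arc i j s = edge_arc i j t -> s = t.
Proof.
  intros Hij Hj Eij Hs Ht Est. assert (Hi : (i < n)%nat) by lia.
  destruct (classic (leaf j)) as [Lj|Lj]; [|destruct (classic (leaf i)) as [Li|Li]].
  - rewrite (proj2 (edge_arc_to_leaf i j s Hi Hj Eij Lj)),
            (proj2 (edge_arc_to_leaf i j t Hi Hj Eij Lj)) in Est.
    destruct (leaf_point_in_cell j Hj Lj) as [Hr _].
    apply (f_equal fst) in Est. unfold leaf_point in Est; simpl in Est.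
    apply (Rmult_eq_reg_r (leaf_reach j)); lra.
  - rewrite (proj2 (edge_arc_from_leaf i j s Hi Hj Eij Li)),
            (proj2 (edge_arc_from_leaf i j t Hi Hj Eij Li)) in Est.
    destruct (leaf_point_in_cell i Hi Li) as [Hr _].
    apply (f_equal fst) in Est. unfold leaf_point in Est; simpl in Est.
    cut (1 - s = 1 - t); [lra|]. apply (Rmult_eq_reg_r (leaf_reach i)); lra.
  - assert (R : regular i j) by (apply edge_regular; auto).
    destruct (edge_arc_regular i j s R Li Lj Hs) as [[E1 A1]|[E1 A1]];
    destruct (edge_arc_regular i j t R Li Lj Ht) as [[E2 A2]|[E2 A2]];
    rewrite E1, E2 in Est.
    + apply (seg_inj _ _ _ _ (contact_neq_center i j i R Hi Li)) in Est; lra.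
    + exfalso; apply (opposite_spokes_disjoint i j _ _ R A1 A2 Est).
    + exfalso; apply (opposite_spokes_disjoint i j _ _ R A2 A1 (eq_sym Est)).
    + apply (seg_inj _ _ _ _ (contact_neq_center j i j (regular_sym _ _ R) Hj Lj)) in Est; lra.
Qed.

Lemma edge_arc_avoids_vertices i j t k : (i < j)%nat -> (j < n)%nat -> ig_edge F i j ->
  0 < t < 1 -> (k < n)%nat -> edge_arc i j t <> vertex k.
Proof.
  intros Hij Hj Eij Ht Hk Eq.
  destruct (edge_arc_interior i j t Hij Hj Eij Ht)
    as [(e&e'&a&R&Ha&Ea&_)|(l&c&Hl&Ll&Hc&Ec&_)]; rewrite ?Ea, ?Ec in Eq;
  (destruct (classic (leaf k)) as [Lk|Lk];
   [rewrite (vertex_leaf k Lk) in Eq; destruct (leaf_point_in_cell k Hk Lk) as [Hr _]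
   |rewrite (vertex_not_leaf k Lk) in Eq]).
  - apply (spoke_not_leaf_point e e' a k (leaf_reach k)); auto; lra.
  - apply (spoke_not_center e e' a k); auto.
  - destruct (leaf_point_inj l k c (leaf_reach k)) as [-> ->]; auto; lra.
  - apply (leaf_point_not_center l c k); auto; lra.
Qed.

Lemma edge_arcs_disjoint i j k l s t : (i < j)%nat -> (j < n)%nat -> (k < l)%nat -> (l < n)%nat ->
  ig_edge F i j -> ig_edge F k l -> (i, j) <> (k, l) -> 0 < s < 1 -> 0 < t < 1 ->
  edge_arc i j s <> edge_arc k l t.
Proof.
  intros Hij Hj Hkl Hl Eij Ekl Ne Hs Ht Eq.
  destruct (edge_arc_interior i j s Hij Hj Eij Hs) as [(e&e'&a&R&Ha&Ea&Ie)|(m&c&Hm&Lm&Hc&Ec&Im)];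
  destruct (edge_arc_interior k l t Hkl Hl Ekl Ht) as [(f&f'&b&R'&Hb&Eb&If)|(m'&c'&Hm'&Lm'&Hc'&Ec'&Im')];
  rewrite ?Ea, ?Ec, ?Eb, ?Ec' in Eq.
  - destruct (spoke_inj e e' a f f' b R Ha R' Hb Eq) as [[-> ->]|[-> ->]];
      apply Ne; destruct Ie as [[-> ->]|[-> ->]]; destruct If as [[-> ->]|[-> ->]];
      f_equal; lia.
  - apply (spoke_not_leaf_point e e' a m' c'); auto; lra.
  - apply (spoke_not_leaf_point f f' b m c); auto; lra.
  - destruct (leaf_point_inj m m' c c') as [<- _]; auto; try lra.
    apply Ne. destruct Im as [[? ?]|[? ?]]; destruct Im' as [[? ?]|[? ?]]; subst; f_equal; lia.
Qed.

End Cells.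

Theorem lemma8 (n : nat) (F : nat -> rect) :
  general_position n F -> triangle_free n F -> non_crossing n F ->
  planar n (ig_edge F).
Proof.
  intros Hgp Htf Hnc. exists (vertex n F), (edge_arc n F). split; [|split].
  - intros i j Hi Hj. apply vertex_inj; auto.
  - intros i j Hij Hj Eij.
    split; [apply polyline_cont|]. split; [apply polyline_0|]. split; [apply polyline_1|].
    split.
    + intros s t Hs Ht. apply (edge_arc_injective n F); auto.
    + intros t k Ht Hk. apply edge_arc_avoids_vertices; auto.
  - intros i j k l Hij Hj Hkl Hl Eij Ekl Ne s t Hs Ht.
    apply edge_arcs_disjoint; auto.
Qed.
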